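(* Let $0\le\mu<L<\infty$, $q=\mu/L$, $f\in\mathcal{F}_{\mu,L}(\mathbb{R}^d)$ with a minimizer $x_\star$ and $f_\star=f(x_\star)$, and let $k\ge 0$. For any $y_{k-1},z_k\in\mathbb{R}^d$ and any $A_k\ge 0$, define $x_k=y_{k-1}-\frac1L\nabla f(y_{k-1})$, $A_{k+1}=\frac{(1+q)A_k+2\left(1+\sqrt{(1+A_k)(1+qA_k)}\right)}{(1-q)^2}$, $\beta_k=\frac{A_k}{(1-q)A_{k+1}}$, $\delta_k=\frac12\frac{(1-q)^2A_{k+1}-(1+q)A_k}{1+q+qA_k}$, $y_k=(1-\beta_k)z_k+\beta_k x_k$, and $z_{k+1}=(1-q\delta_k)z_k+q\delta_k y_k-\frac{\delta_k}{L}\nabla f(y_k)$. Then $\phi_{k+1}\le\phi_k$, where for $j\in\{k,k+1\}$ \[ \phi_j=(1-q)A_j\left[f(y_{j-1})-f_\star-\tfrac{1}{2L}\|\nabla f(y_{j-1})\|^2-\tfrac{\mu}{2(1-\mu/L)}\|y_{j-1}-\tfrac1L\nabla f(y_{j-1})-x_\star\|^2\right]+(L+\mu A_j)\|z_j-x_\star\|^2 . \]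
   Context: $\mathcal{F}_{\mu,L}(\mathbb{R}^d)$ denotes the set of proper closed convex functions $f:\mathbb{R}^d\to\mathbb{R}$ such that for all $x,y$: $f(x)\le f(y)+\langle\nabla f(y);x-y\rangle+\frac L2\|x-y\|^2$ and $f(x)\ge f(y)+\langle\nabla f(y);x-y\rangle+\frac\mu2\|x-y\|^2$. *)

From HB Require Import structures.
From mathcomp Require Import all_boot all_order all_algebra.
From mathcomp Require Import all_classical all_reals all_analysis.
Set Implicit Arguments. Unset Strict Implicit. Unset Printing Implicit Defensive.
Import Order.TTheory GRing.Theory Num.Theory.
Import numFieldNormedType.Exports.
Local Open Scope ring_scope.

Definition dot (R : realType) (d : nat) (u v : 'rV[R]_d) : R :=
  \sum_(i < d) u 0 i * v 0 i.

Definition sqnorm (R : realType) (d : nat) (u : 'rV[R]_d) : R := dot u u.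

Definition is_gradient (R : realType) (d : nat) (f : 'rV[R]_d -> R)
    (g : 'rV[R]_d -> 'rV[R]_d) : Prop :=
  (forall x, differentiable f x) /\ (forall x h, 'd f x h = dot (g x) h).

(* f \in F_{mu,L}(R^d), with gradient g. Convexity and closedness of f are
   implied (mu >= 0 lower bound, differentiability); properness is automatic
   for a real-valued f. *)
Definition in_FmuL (R : realType) (d : nat) (mu L : R) (f : 'rV[R]_d -> R)
    (g : 'rV[R]_d -> 'rV[R]_d) : Prop :=
  is_gradient f g /\
  (forall x y : 'rV[R]_d,
      f x <= f y + dot (g y) (x - y) + L / 2 * sqnorm (x - y) /\
      f y + dot (g y) (x - y) + mu / 2 * sqnorm (x - y) <= f x).

(* The interpolation inequality of F_{mu,L}, used between y_{k-1} and y_k with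
   weight (1-q) A_k and between x_* and y_k with weight (1-q) (A_{k+1} - A_k),
   sums exactly to phi_{k+1} - phi_k <= 0.  Once the function values cancel,
   what remains is an identity between quadratic forms in y_{k-1}, z_k, x_*
   and the two gradients; it holds because delta_k is the positive root of
   (1 + q + q A_k) delta^2 = 2 delta + A_k, which makes A_k and A_{k+1}
   rational functions of delta_k. *)

From HB Require Import structures.
From mathcomp Require Import all_boot all_order all_algebra.
From mathcomp Require Import all_classical all_reals all_analysis.
From mathcomp Require Import ring lra.
Import Order.TTheory GRing.Theory Num.Theory.
Import numFieldNormedType.Exports.
Set Implicit Arguments. Unset Strict Implicit. Unset Printing Implicit Defensive.
Local Open Scope ring_scope.

Ltac coordinatewise :=
  rewrite /sqnorm /dot;
  do 5 rewrite ?mulr_sumr -?sumrN -?sumrB -?big_split /=.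

Section EuclideanNorm.
Variables (R : realType) (d : nat).

Lemma sqnorm_ge0 (u : 'rV[R]_d) : 0 <= sqnorm u.
Proof. by rewrite /sqnorm /dot sumr_ge0 // => i _; rewrite -expr2 sqr_ge0. Qed.

Lemma sqnorm_eq0 (u : 'rV[R]_d) : sqnorm u = 0 -> u = 0.
Proof.
move=> /eqP; rewrite /sqnorm /dot psumr_eq0 => [/allP u0|i _]; last first.
  by rewrite -expr2 sqr_ge0.
apply/rowP => i; rewrite mxE.
by move: (u0 i (mem_index_enum _)); rewrite /= mulf_eq0 orbb => /eqP.
Qed.

End EuclideanNorm.

Definition interp_bound (R : realType) (d : nat) (mu L : R)
    (x y gx gy : 'rV[R]_d) : R :=
  dot gy (x - y) + 1 / (2 * L) * sqnorm (gx - gy)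
  + mu / (2 * (1 - mu / L)) * sqnorm (x - y - L^-1 *: (gx - gy)).

Section SmoothStronglyConvex.
Variables (R : realType) (d : nat) (mu L : R).
Variables (f : 'rV[R]_d -> R) (g : 'rV[R]_d -> 'rV[R]_d).
Hypotheses (mu_ge0 : 0 <= mu) (mu_ltL : mu < L) (fF : in_FmuL mu L f g).

Let L_gt0 : 0 < L. Proof. exact: le_lt_trans mu_ltL. Qed.
Let L_neq0 : L != 0. Proof. by rewrite gt_eqF. Qed.

(* Upper bound around [x] and lower bound around [y], both evaluated at the
   point [w] maximizing the gap between the two quadratic models. *)
Lemma FmuL_interpolation x y : f y + interp_bound mu L x y (g x) (g y) <= f x.
Proof.
have Lmu_neq0 : L - mu != 0 by rewrite subr_eq0 gt_eqF.
have q_neq1 : 1 - mu / L != 0.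
  by rewrite -(divff L_neq0) -mulrBl mulf_neq0 // invr_eq0.
pose w := x - (L - mu)^-1 *: (g x - g y - mu *: (x - y)).
have [_ lower] := fF.2 w y.
have [upper _] := fF.2 w x.
suff -> : interp_bound mu L x y (g x) (g y) =
    dot (g y) (w - y) + mu / 2 * sqnorm (w - y)
    - (dot (g x) (w - x) + L / 2 * sqnorm (w - x)) by lra.
rewrite /interp_bound; coordinatewise.
by apply: eq_bigr => i _; rewrite /w !mxE; field; rewrite ?Lmu_neq0 ?L_neq0 ?q_neq1.
Qed.

Lemma FmuL_descent x : f (x - L^-1 *: g x) <= f x - 1 / (2 * L) * sqnorm (g x).
Proof.
have [upper _] := fF.2 (x - L^-1 *: g x) x.
suff : dot (g x) (x - L^-1 *: g x - x) + L / 2 * sqnorm (x - L^-1 *: g x - x)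
       = - (1 / (2 * L) * sqnorm (g x)) by lra.
coordinatewise.
by apply: eq_bigr => i _; rewrite !mxE; field.
Qed.

Lemma FmuL_grad_eq0_at_min xs : (forall x, f xs <= f x) -> g xs = 0.
Proof.
move=> xs_min; apply: sqnorm_eq0; apply/eqP; rewrite eq_le sqnorm_ge0 andbT.
have := le_trans (xs_min _) (FmuL_descent xs).
by rewrite lerDl oppr_ge0 pmulr_rle0 // divr_gt0 // mulr_gt0.
Qed.

End SmoothStronglyConvex.

Definition next_A (R : realType) (q A : R) : R :=
  ((1 + q) * A + 2 * (1 + Num.sqrt ((1 + A) * (1 + q * A)))) / (1 - q) ^+ 2.

Definition step_delta (R : realType) (q A : R) : R :=
  (1 / 2) * (((1 - q) ^+ 2 * next_A q A - (1 + q) * A) / (1 + q + q * A)).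

Section StepSizes.
Variables (R : realType) (q A : R).
Hypotheses (q_ge0 : 0 <= q) (q_lt1 : q < 1) (A_ge0 : 0 <= A).

Local Notation B := (next_A q A).
Local Notation delta := (step_delta q A).
Local Notation s := (Num.sqrt ((1 + A) * (1 + q * A))).

Let D_gt0 : 0 < 1 + q + q * A.
Proof. exact: ltr_wpDr (mulr_ge0 q_ge0 A_ge0) (ltr_wpDr q_ge0 ltr01). Qed.

Let q_neq1 : 1 - q != 0.
Proof. by rewrite subr_eq0 eq_sym lt_eqF. Qed.

Let s_ge0 : 0 <= s. Proof. exact: sqrtr_ge0. Qed.

Lemma next_A_sqrt : (1 - q) ^+ 2 * B = (1 + q) * A + 2 * (1 + s).
Proof. by rewrite /next_A; field. Qed.

Lemma step_delta_sqrt : delta * (1 + q + q * A) = 1 + s.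
Proof. by rewrite /step_delta next_A_sqrt; field; rewrite gt_eqF. Qed.

Lemma step_delta_gt0 : 0 < delta.
Proof. by rewrite -(pmulr_lgt0 _ D_gt0) step_delta_sqrt ltr_pwDl. Qed.

Lemma step_delta_root : (1 + q + q * A) * delta ^+ 2 = 2 * delta + A.
Proof.
have s2 : s ^+ 2 = (1 + A) * (1 + q * A).
  by rewrite sqr_sqrtr // mulr_ge0 // addr_ge0 // mulr_ge0.
have e : (1 + q + q * A) * ((1 + q + q * A) * delta ^+ 2 - 2 * delta - A)
         = (delta * (1 + q + q * A) - 1) ^+ 2 - (1 + A) * (1 + q * A) by ring.
move: e; rewrite step_delta_sqrt [1 + s]addrC addrK s2 subrr.
by move=> /eqP; rewrite mulf_eq0 gt_eqF //= => /eqP; lra.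
Qed.

Lemma A_step_weight : A * (1 - q * delta ^+ 2) = (1 + q) * delta ^+ 2 - 2 * delta.
Proof. by have := step_delta_root; lra. Qed.

Lemma next_A_step_weight : B * (1 - q * delta ^+ 2) = delta ^+ 2.
Proof.
apply: (mulfI (expf_neq0 2 q_neq1)); rewrite mulrA next_A_sqrt -step_delta_sqrt.
have := congr1 (fun t => (1 + q + 2 * q * delta) * t) A_step_weight.
by rewrite /=; lra.
Qed.

Lemma next_A_gt0 : 0 < B.
Proof.
apply: divr_gt0; last by rewrite exprn_gt0 // subr_gt0.
by rewrite ltr_wpDl ?mulr_ge0 ?addr_ge0 // mulr_gt0 // ltr_pwDl.
Qed.

Lemma step_weight_gt0 : 0 < 1 - q * delta ^+ 2.
Proof.
by rewrite -(pmulr_rgt0 _ next_A_gt0) next_A_step_weight exprn_gt0 // step_delta_gt0.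
Qed.

Lemma le_next_A : A <= B.
Proof.
have q2_gt0 : 0 < (1 - q) ^+ 2 by rewrite exprn_gt0 // subr_gt0.
rewrite -subr_ge0 -(pmulr_rge0 _ q2_gt0) mulrBr next_A_sqrt.
have : 0 <= q * (3 - q) * A.
  by rewrite !mulr_ge0 // subr_ge0 (le_trans (ltW q_lt1)) // ler1n.
by move: s_ge0; lra.
Qed.

End StepSizes.

Definition lyap_quad (R : realType) (d : nat) (mu L : R) (xs : 'rV[R]_d)
    (A : R) (y gy z : 'rV[R]_d) : R :=
  (1 - mu / L) * A * (- (1 / (2 * L)) * sqnorm gy
                      - mu / (2 * (1 - mu / L)) * sqnorm (y - L^-1 *: gy - xs))
  + (L + mu * A) * sqnorm (z - xs).

Lemma lyap_quad_step (R : realType) (d : nat) (mu L delta A B : R)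
    (xs yprev gprev z gy : 'rV[R]_d) :
  L != 0 -> L - mu != 0 -> delta != 0 -> 1 - mu / L * delta ^+ 2 != 0 ->
  A * (1 - mu / L * delta ^+ 2) = (1 + mu / L) * delta ^+ 2 - 2 * delta ->
  B * (1 - mu / L * delta ^+ 2) = delta ^+ 2 ->
  let beta := A / ((1 - mu / L) * B) in
  let y := (1 - beta) *: z + beta *: (yprev - L^-1 *: gprev) in
  let z1 := (1 - mu / L * delta) *: z + (mu / L * delta) *: y - (delta / L) *: gy in
  lyap_quad mu L xs B y gy z1 - lyap_quad mu L xs A yprev gprev z
  = (1 - mu / L) * A * interp_bound mu L yprev y gprev gy
    + (1 - mu / L) * (B - A) * interp_bound mu L xs y 0 gy.
Proof.
move=> L_neq0 Lmu_neq0 delta_neq0 Q_neq0 A_step B_step beta y z1.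
have {}A_step := canRL (mulfK Q_neq0) A_step.
have {}B_step := canRL (mulfK Q_neq0) B_step.
have LQ_neq0 : L - mu * delta ^+ 2 != 0.
  by rewrite (_ : L - _ = L * (1 - mu / L * delta ^+ 2)) ?mulf_neq0 //; field.
apply/eqP; rewrite -subr_eq0; apply/eqP.
rewrite /lyap_quad /interp_bound; coordinatewise.
rewrite big1 // => i _; rewrite /z1 /y /beta !mxE A_step B_step.
by field; rewrite L_neq0 Lmu_neq0 LQ_neq0 delta_neq0.
Qed.

Definition lyap (R : realType) (d : nat) (mu L : R) (f : 'rV[R]_d -> R)
    (g : 'rV[R]_d -> 'rV[R]_d) (xs : 'rV[R]_d) (A : R) (y z : 'rV[R]_d) : R :=
  (1 - mu / L) * A * (f y - f xs - 1 / (2 * L) * sqnorm (g y)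
                      - mu / (2 * (1 - mu / L)) * sqnorm (y - L^-1 *: g y - xs))
  + (L + mu * A) * sqnorm (z - xs).

Lemma lyapE (R : realType) (d : nat) (mu L : R) (f : 'rV[R]_d -> R)
    (g : 'rV[R]_d -> 'rV[R]_d) (xs : 'rV[R]_d) (A : R) (y z : 'rV[R]_d) :
  lyap mu L f g xs A y z
  = (1 - mu / L) * A * (f y - f xs) + lyap_quad mu L xs A y (g y) z.
Proof. by rewrite /lyap /lyap_quad; ring. Qed.

Section AcceleratedStep.
Variables (R : realType) (d : nat) (mu L : R).
Variables (f : 'rV[R]_d -> R) (g : 'rV[R]_d -> 'rV[R]_d).
Variables (xs yprev zk : 'rV[R]_d) (Ak : R).
Hypotheses (mu_ge0 : 0 <= mu) (mu_ltL : mu < L) (fF : in_FmuL mu L f g).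
Hypotheses (xs_min : forall x, f xs <= f x) (Ak_ge0 : 0 <= Ak).

Local Notation q := (mu / L).
Local Notation Ak1 := (next_A q Ak).
Local Notation deltak := (step_delta q Ak).
Local Notation betak := (Ak / ((1 - q) * Ak1)).
Local Notation yk := ((1 - betak) *: zk + betak *: (yprev - L^-1 *: g yprev)).
Local Notation zk1 := ((1 - q * deltak) *: zk + (q * deltak) *: yk - (deltak / L) *: g yk).

Lemma lyap_decrease : lyap mu L f g xs Ak1 yk zk1 <= lyap mu L f g xs Ak yprev zk.
Proof.
have L_gt0 : 0 < L := le_lt_trans mu_ge0 mu_ltL.
have q_ge0 : 0 <= q by rewrite divr_ge0 // ltW.
have q_lt1 : q < 1 by rewrite ltr_pdivrMr // mul1r.
have Lmu_neq0 : L - mu != 0 by rewrite subr_eq0 gt_eqF.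
have step : lyap_quad mu L xs Ak1 yk (g yk) zk1 - lyap_quad mu L xs Ak yprev (g yprev) zk
    = (1 - q) * Ak * interp_bound mu L yprev yk (g yprev) (g yk)
      + (1 - q) * (Ak1 - Ak) * interp_bound mu L xs yk 0 (g yk).
  exact: lyap_quad_step (lt0r_neq0 L_gt0) Lmu_neq0
    (lt0r_neq0 (step_delta_gt0 q_ge0 q_lt1 Ak_ge0))
    (lt0r_neq0 (step_weight_gt0 q_ge0 q_lt1 Ak_ge0))
    (A_step_weight q_ge0 q_lt1 Ak_ge0) (next_A_step_weight q_ge0 q_lt1 Ak_ge0).
have I1 := FmuL_interpolation mu_ge0 mu_ltL fF yprev yk.
have I2 := FmuL_interpolation mu_ge0 mu_ltL fF xs yk.
rewrite (FmuL_grad_eq0_at_min mu_ge0 mu_ltL fF xs_min) in I2.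
have w1 : 0 <= (1 - q) * Ak by rewrite mulr_ge0 // subr_ge0 ltW.
have w2 : 0 <= (1 - q) * (Ak1 - Ak).
  by rewrite mulr_ge0 // subr_ge0 ?(ltW q_lt1) ?(le_next_A q_ge0 q_lt1 Ak_ge0).
rewrite -subr_ge0 in I1; rewrite -subr_ge0 in I2.
have := mulr_ge0 w1 I1; have := mulr_ge0 w2 I2.
by rewrite !lyapE; move: step; lra.
Qed.

End AcceleratedStep.

Theorem lemma1 (R : realType) (d : nat) (mu L : R)
  (f : 'rV[R]_d -> R) (g : 'rV[R]_d -> 'rV[R]_d) (xs : 'rV[R]_d)
  (yprev zk : 'rV[R]_d) (Ak : R) :
  0 <= mu -> mu < L ->
  in_FmuL mu L f g ->
  (forall x, f xs <= f x) ->
  0 <= Ak ->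
  let q := mu / L in
  let fs := f xs in
  let xk := yprev - L^-1 *: g yprev in
  let Ak1 := ((1 + q) * Ak + 2 * (1 + Num.sqrt ((1 + Ak) * (1 + q * Ak))))
               / (1 - q) ^+ 2 in
  let betak := Ak / ((1 - q) * Ak1) in
  let deltak := (1 / 2) * (((1 - q) ^+ 2 * Ak1 - (1 + q) * Ak)
                            / (1 + q + q * Ak)) in
  let yk := (1 - betak) *: zk + betak *: xk in
  let zk1 := (1 - q * deltak) *: zk + (q * deltak) *: yk
             - (deltak / L) *: g yk in
  let phi := fun (A : R) (y z : 'rV[R]_d) =>
    (1 - q) * A * (f y - fs - 1 / (2 * L) * sqnorm (g y)
                   - mu / (2 * (1 - mu / L)) * sqnorm (y - L^-1 *: g y - xs))
    + (L + mu * A) * sqnorm (z - xs) in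
  phi Ak1 yk zk1 <= phi Ak yprev zk.
Proof. by move=> mu_ge0 mu_ltL fF xs_min Ak_ge0; exact: lyap_decrease. Qed.
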